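(* Let $\mathcal{T}$ be a trivalent tree with $n\ge 3$ labelled leaves and $Q_{\mathcal{T}}(sl_3(\mathbb{C}))$ as in the context. For every proper subtree $\mathcal{T}'\subset\mathcal{T}$ there are exactly two minimal generators of $Q_{\mathcal{T}}(sl_3(\mathbb{C}))$ whose support is $\mathcal{T}'$, and every minimal generator arises in this way. Consequently $Q_{\mathcal{T}}(sl_3(\mathbb{C}))$ has exactly $2(2^n-n-1)$ minimal generators.
   Context: A Berenstein–Zelevinsky (BZ) triangle for $sl_3(\mathbb{C})$ is a $9$-tuple of nonnegative integers $(a,b,c,d,e,f,g,h,i)$ placed on the vertices of a triangular diagram with rows $a$; $b\ c$; $d\ e$; $f\ g\ h\ i$, so that the sides of the big triangle, oriented counterclockwise, read: side 1 $=(a,b,d,f)$, side 2 $=(f,g,h,i)$, side 3 $=(i,e,c,a)$, and $b,c,e,h,g,d$ form (in this cyclic order) a central hexagon. The entries satisfy $b+c=g+h$, $c+e=d+g$, $e+h=b+d$. The boundary weight of a side read as $(x_1,x_2,x_3,x_4)$ is $(x_1+x_2)\omega_1+(x_3+x_4)\omega_2$, identified with $(x_1+x_2,x_3+x_4)\in\mathbb{Z}_{\ge0}^2$. Let $\mathcal{T}$ be a tree whose non-leaf vertices (trinodes) all have degree $3$, with leaves labelled $1,\dots,n$. Attach to each trinode $v$ a BZ triangle, with a fixed bijection between its sides (counterclockwise) and the edges at $v$. $Q_{\mathcal{T}}(sl_3(\mathbb{C}))$ is the semigroup under entrywise addition of such assignments such that for each edge joining trinodes $v,v'$, if $v$'s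 side on that edge has boundary weight $(p,q)$ then $v'$'s side on it has boundary weight $(q,p)$. The weight on a leaf edge is the boundary weight of the corresponding side of the adjacent trinode's triangle. The support of $w\in Q_{\mathcal{T}}(sl_3(\mathbb{C}))$ is the set of edges of $\mathcal{T}$ on which the boundary weight of $w$ is nonzero. A subtree $\mathcal{T}'\subset\mathcal{T}$ (connected subgraph with at least one edge) is proper if every leaf of $\mathcal{T}'$ is a leaf of $\mathcal{T}$; proper subtrees correspond to subsets of at least two leaves of $\mathcal{T}$. *)

From mathcomp Require Import all_boot.
Set Implicit Arguments. Unset Strict Implicit. Unset Printing Implicit Defensive.

Record tritree := TriTree {
  tv : finType;
  tadj : rel tv;
  tadj_sym : symmetric tadj;
  tadj_irr : irreflexive tadj;
  tconn : forall x y : tv, connect tadj x y;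
  tacyc : forall (x : tv) (p : seq tv),
      path tadj x p -> uniq (x :: p) -> 2 <= size p -> ~~ tadj (last x p) x;
  tdeg : forall v : tv, #|[set y | tadj v y]| = 1 \/ #|[set y | tadj v y]| = 3;
  (* side k (k = 0,1,2, counterclockwise) of the triangle at a trinode v
     corresponds to the edge from v to (tside v k) *)
  tside : tv -> 'I_3 -> tv;
  tside_adj : forall v k, #|[set y | tadj v y]| = 3 -> tadj v (tside v k);
  tside_inj : forall v, #|[set y | tadj v y]| = 3 -> injective (tside v)
}.

Definition degree (T : tritree) (v : tv T) := #|[set y | tadj v y]|.
Definition leaves (T : tritree) : {set tv T} := [set v | degree v == 1].
Definition trinode (T : tritree) (v : tv T) := degree v == 3.

(* ---------- BZ triangles: entries a,b,c,d,e,f,g,h,i = indices 0..8 ---------- *)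
Definition bz := {ffun 'I_9 -> nat}.
Definition ent (t : bz) (j : nat) : nat := t (inord j).

Definition hexagon (t : bz) : bool :=
  [&& ent t 1 + ent t 2 == ent t 6 + ent t 7,
      ent t 2 + ent t 4 == ent t 3 + ent t 6
    & ent t 4 + ent t 7 == ent t 1 + ent t 3].

(* sides, read counterclockwise: (a,b,d,f), (f,g,h,i), (i,e,c,a) *)
Definition side_idx (k : 'I_3) : nat * nat * nat * nat :=
  match val k with
  | 0 => (0, 1, 3, 5)
  | 1 => (5, 6, 7, 8)
  | _ => (8, 4, 2, 0)
  end%N.

(* boundary weight (x1+x2) w1 + (x3+x4) w2 of side k *)
Definition bweight (t : bz) (k : 'I_3) : nat * nat :=
  let: (i1, i2, i3, i4) := side_idx k in
  (ent t i1 + ent t i2, ent t i3 + ent t i4)%N.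

(* an assignment gives a BZ triangle at each trinode (and is 0 at leaves) *)
Definition assignment (T : tritree) := {ffun tv T -> bz}.

Definition zero_bz : bz := [ffun _ => 0%N].
Definition zero_assign (T : tritree) : assignment T := [ffun _ => zero_bz].
Definition add_assign (T : tritree) (w u : assignment T) : assignment T :=
  [ffun v => [ffun j => (w v j + u v j)%N]].

Definition inQ (T : tritree) (w : assignment T) : Prop :=
  (forall v, ~~ trinode v -> w v = zero_bz) /\
  (forall v, trinode v -> hexagon (w v)) /\
  (forall v v' (k k' : 'I_3), trinode v -> trinode v' ->
      tside v k = v' -> tside v' k' = v ->
      bweight (w v) k = ((bweight (w v') k').2, (bweight (w v') k').1)).

Definition min_gen (T : tritree) (w : assignment T) : Prop :=
  inQ w /\ w <> zero_assign T /\
  ~ (exists u u', inQ u /\ inQ u' /\ u <> zero_assign T /\ u' <> zero_assign T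
                  /\ w = add_assign u u').

(* ---------- bz_support and proper subtrees (edges as ordered pairs, both orientations) ---------- *)
(* weight of the edge {x,y} seen from x is nonzero (x must be a trinode,
   otherwise w x = 0 and this is false) *)
Definition nz_from (T : tritree) (w : assignment T) (x y : tv T) : bool :=
  [exists k : 'I_3, (tside x k == y) && (bweight (w x) k != (0, 0)%N)].

Definition bz_support (T : tritree) (w : assignment T) : {set tv T * tv T} :=
  [set p | tadj p.1 p.2 && (nz_from w p.1 p.2 || nz_from w p.2 p.1)].

(* subtrees of a tree are induced by their vertex sets *)
Definition sub_edges (T : tritree) (S : {set tv T}) : {set tv T * tv T} :=
  [set p | [&& tadj p.1 p.2, p.1 \in S & p.2 \in S]].

Definition proper_subtree (T : tritree) (S : {set tv T}) : Prop :=
  (2 <= #|S|)%N /\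
  (forall x y, x \in S -> y \in S ->
     connect (fun a b => [&& tadj a b, a \in S & b \in S]) x y) /\
  (forall x, x \in S -> #|[set y in S | tadj x y]| = 1%N -> x \in leaves T).

From mathcomp Require Import all_boot zify.
Set Implicit Arguments. Unset Strict Implicit. Unset Printing Implicit Defensive.

(* The nonzero BZ triangles that are not sums of two nonzero ones are eight
   triangles with 0/1 entries. Each has boundary weight 0, omega_1 or omega_2 on
   every side, is nonzero on at least two sides, and is determined by its
   nonzero sides together with the weight on one of them.
   If w is a minimal generator of Q_T, an elementary triangle below w at one
   trinode propagates across the tree to an element of Q_T below w, so by
   minimality w is elementary or 0 at every trinode. Its support is connected,
   since restricting w to a component would split it, and every trinode of the
   support uses at least two sides, so the support is a proper subtree S.
   Conversely, prescribing omega_1 or omega_2 on one edge of S propagates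
   uniquely along S to a generator with support S. Finally a proper subtree is
   the convex hull of its leaves and every set of at least two leaves spans one,
   so there are 2^n - n - 1 proper subtrees. *)

Section TreeFacts.
Variable T : tritree.
Local Notation V := (tv T).
Local Notation adj := (@tadj T).

Definition induced (C : {set V}) : rel V := fun a b => [&& adj a b, a \in C & b \in C].
Definition induced_connected (C : {set V}) :=
  forall a b, a \in C -> b \in C -> connect (induced C) a b.
Definition trinodes : {set V} := [set v | trinode v].

Lemma adj_sym (x y : V) : adj x y = adj y x. Proof. exact: tadj_sym. Qed.
Lemma adj_irr (x : V) : adj x x = false. Proof. exact: tadj_irr. Qed.
Lemma adj_neq (x y : V) : adj x y -> x != y.
Proof. by apply: contraTneq => ->; rewrite adj_irr. Qed.

Lemma induced_sym (C : {set V}) : symmetric (induced C).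
Proof. by move=> a b; rewrite /induced adj_sym; do 2!case: (_ \in C); rewrite ?andbF. Qed.

Lemma connect_induced_sub (A B : {set V}) x y : A \subset B ->
  connect (induced A) x y -> connect (induced B) x y.
Proof.
move=> AB; apply: connect_sub => a b /and3P[ab aA bA]; apply: connect1.
by rewrite /induced ab !(subsetP AB).
Qed.

Lemma connect_induced_setT (x y : V) : connect (induced setT) x y.
Proof.
by apply: connect_sub (tconn x y) => a b ab; apply: connect1; rewrite /induced ab !inE.
Qed.

Lemma connect_propagate (e : rel V) (P : V -> Prop) x y :
  (forall a b, e a b -> P a -> P b) -> connect e x y -> P x -> P y.
Proof.
move=> cl /connectP[p ep ->]; elim: p x ep => //= c p IH x /andP[xc ep] Px.
exact: IH ep (cl _ _ xc Px).
Qed.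

Lemma connect_exit (e : rel V) (P : pred V) a b : connect e a b -> P a -> ~~ P b ->
  exists x y, [/\ P x, ~~ P y, e x y & connect (fun c d => [&& e c d, P c & P d]) a x].
Proof.
move=> /connectP[p ep ->{b}]; elim: p a ep => [|c p IH] a /=; first by move=> _ ->.
move=> /andP[eac ep] Pa; case Pc: (P c) => Pl.
  have [x [y [Px Py exy cx]]] := IH c ep Pc Pl.
  by exists x, y; split => //; apply: connect_trans cx; apply: connect1; rewrite eac Pa Pc.
by exists a, c; rewrite Pa Pc eac; split => //; apply: connect0.
Qed.

Lemma path_all (e : rel V) (P : pred V) x p :
  (forall a b, e a b -> P b) -> path e x p -> all P p.
Proof.
move=> eP; elim: p x => //= y p IH x /andP[/eP -> py]; exact: IH py.
Qed.

Lemma neighbours_disconnected (C : {set V}) x y z : x \notin C ->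
  adj x y -> adj x z -> y != z -> ~~ connect (induced C) y z.
Proof.
move=> xC axy axz yz; apply/negP => /connectP[p ep zE]; subst z.
case/shortenP: ep axz yz => q eq uq _ axz yz.
have qC : all (fun b => b \in C) q by apply: path_all eq => a b /and3P[].
have := @tacyc T x (y :: q); rewrite /= axy (sub_path _ eq); last by move=> a b /and3P[].
rewrite in_cons negb_or adj_neq //.
have -> : x \notin q by apply: contra xC => xq; exact: (allP qC).
case: q {eq qC} uq yz axz => [|z q] /= uq; first by rewrite eqxx.
by move=> _ axz /(_ isT uq isT); rewrite adj_sym axz.
Qed.

Lemma trinode_of_neighbours (y a b : V) : adj y a -> adj y b -> a != b -> trinode y.
Proof.
move=> ya yb ab; have : 1 < degree y by apply/card_gt1P; exists a, b; rewrite !inE ya yb.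
by rewrite /trinode; case: (tdeg y); rewrite /degree => ->.
Qed.

Lemma leafE (y : V) : (y \in leaves T) = ~~ trinode y.
Proof. by rewrite inE /trinode /degree; case: (tdeg y) => ->. Qed.

Lemma leaf_adj_uniq (u a b : V) : u \in leaves T -> adj u a -> adj u b -> a = b.
Proof.
rewrite leafE => lu ua ub; apply/eqP; apply: contraNT lu => ab.
exact: trinode_of_neighbours ua ub ab.
Qed.

Lemma adj_tside (v : V) k : trinode v -> adj v (tside v k).
Proof. by move/eqP; apply: tside_adj. Qed.

Lemma tside_injective (v : V) : trinode v -> injective (tside v).
Proof. by move/eqP; apply: tside_inj. Qed.

Lemma tside_onto (v y : V) : trinode v -> adj v y -> exists k, tside v k = y.
Proof.
move=> tv vy.
have im : [set tside v k | k : 'I_3] = [set u | adj v u].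
  apply/eqP; rewrite eqEcard card_imset ?card_ord; last exact: tside_injective.
  have := tv; rewrite /trinode /degree => /eqP ->; rewrite leqnn andbT.
  by apply/subsetP => u /imsetP[k _ ->]; rewrite inE adj_tside.
have : y \in [set tside v k | k : 'I_3] by rewrite im inE.
by case/imsetP => k _ ->; exists k.
Qed.

Lemma tside_edge (v v' : V) : trinode v -> trinode v' -> adj v v' ->
  exists k k', tside v k = v' /\ tside v' k' = v.
Proof.
move=> tv tv' vv'; have [k Ek] := tside_onto tv vv'.
have [k' Ek'] : exists k', tside v' k' = v by apply: tside_onto; rewrite // adj_sym.
by exists k, k'.
Qed.

Lemma leaves_nonadjacent : 3 <= #|leaves T| ->
  forall l1 l2 : V, l1 \in leaves T -> l2 \in leaves T -> ~~ adj l1 l2.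
Proof.
move=> n3 l1 l2 L1 L2; apply/negP => a12.
have cl : closed adj [set l1; l2].
  apply: intro_closed; first exact/sym_connect_sym/tadj_sym.
  move=> u w uw; rewrite !inE => /orP[]/eqP Eu; subst u.
    by rewrite (leaf_adj_uniq L1 uw a12) eqxx orbT.
  by rewrite (leaf_adj_uniq L2 uw (_ : adj l2 l1)) ?eqxx // adj_sym.
have all2 : [set: V] \subset [set l1; l2].
  apply/subsetP => x _; rewrite -(closed_connect cl (tconn l1 x)).
  by rewrite !inE eqxx.
have := leq_trans (subset_leq_card (subsetT (leaves T))) (subset_leq_card all2).
by rewrite cards2; move: n3; case: (l1 != l2) => /=; lia.
Qed.

Lemma path_induced_trinodes (C : {set V}) (x : V) p :
  path (induced C) x p -> uniq (x :: p) -> trinode x -> trinode (last x p) ->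
  path (induced (C :&: trinodes)) x p.
Proof.
elim: p x => //= y p IH x /andP[/and3P[xy xC yC] ep] /andP[xnin up] tx tl.
have ty : trinode y.
  case: p ep xnin up tl {IH} => [|z q] //= /andP[/and3P[yz _ _] _] xnin _ _.
  apply: (trinode_of_neighbours (a := x) (b := z)) => //; first by rewrite adj_sym.
  by apply: contra xnin => /eqP ->; rewrite !inE eqxx orbT.
by rewrite /induced xy !inE xC yC tx ty /= IH.
Qed.

Lemma connect_induced_trinodes (C : {set V}) (x y : V) :
  connect (induced C) x y -> trinode x -> trinode y ->
  connect (induced (C :&: trinodes)) x y.
Proof.
move=> /connectP[p ep ->{y}]; case/shortenP: ep => q eq uq _ tx tl.
by apply/connectP; exists q => //; apply: path_induced_trinodes.
Qed.

Lemma induced_connected1 (x : V) : induced_connected [set x].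
Proof. by move=> a b /set1P -> /set1P ->; apply: connect0. Qed.

Lemma induced_connected_setU1 (R : {set V}) x y :
  induced_connected R -> x \in R -> adj x y -> induced_connected (y |: R).
Proof.
move=> cR xR xy.
have lift a b : a \in R -> b \in R -> connect (induced (y |: R)) a b.
  by move=> aR bR; apply: connect_induced_sub (cR _ _ aR bR); apply: subsetUr.
have yx : connect (induced (y |: R)) y x.
  by apply: connect1; rewrite /induced adj_sym xy !in_setU1 eqxx xR orbT.
have sym := sym_connect_sym (induced_sym (y |: R)).
move=> a b /setU1P[->|aR] /setU1P[->|bR].
- exact: connect0.
- exact: connect_trans yx (lift _ _ xR bR).
- by rewrite sym; exact: connect_trans yx (lift _ _ xR aR).
- exact: lift.
Qed.

Lemma boundary_trinode (R : {set V}) :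
  R != set0 -> R \subset trinodes -> induced_connected R -> ~~ (trinodes \subset R) ->
  exists x y, [/\ x \in R, y \notin R, trinode y, adj x y &
                  forall x', x' \in R -> adj y x' -> x' = x].
Proof.
case/set0Pn => v0 v0R RT cR /subsetPn[y0 ty0 y0R].
have tv0 : trinode v0 by have := subsetP RT _ v0R; rewrite inE.
rewrite inE in ty0.
have [x [y [xR yR /and3P[xy _ yT] _]]] := connect_exit
  (connect_induced_trinodes (connect_induced_setT v0 y0) tv0 ty0) v0R y0R.
exists x, y; split => // [|x' x'R yx']; first by move: yT; rewrite !inE.
apply/eqP; apply: contraTT (cR _ _ x'R xR) => nx.
by apply: neighbours_disconnected yR yx' _ nx; rewrite adj_sym.
Qed.

Lemma connect_adj_edge (e : rel V) a b : subrel e adj -> connect e a b -> adj a b -> e a b.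
Proof.
move=> eA /connectP[p ep bE] ab; move: ep bE; case/shortenP => q eq uq _ bE.
case: q eq uq bE => [|c [|d q]] eq uq bE.
- by move: ab; rewrite bE adj_irr.
- by move: eq; rewrite /= bE andbT.
- have := @tacyc T a [:: c, d & q] (sub_path eA eq) uq isT.
  by rewrite -bE adj_sym ab.
Qed.

End TreeFacts.

Section Propagation.
Variables (T : tritree) (A : Type) (ok : tv T -> A -> Prop).
Variable glue : tv T -> tv T -> A -> A -> Prop.
Local Notation V := (tv T).
Local Notation adj := (@tadj T).
Hypothesis glue_sym : forall v v' a a', glue v v' a a' -> glue v' v a' a.
Hypothesis ok_extend : forall v v' a, trinode v -> trinode v' -> adj v v' -> ok v a ->
  exists2 a', ok v' a' & glue v v' a a'.

Definition glued_on (R : {set V}) (f : V -> A) :=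
  (forall v, v \in R -> ok v (f v)) /\
  (forall v v', v \in R -> v' \in R -> adj v v' -> glue v v' (f v) (f v')).

(* In a tree a new trinode meets the region built so far in a single
   neighbour, so only one gluing constrains its value. *)
Lemma propagate_from m (R : {set V}) (f : V -> A) v0 :
  #|trinodes T :\: R| <= m -> v0 \in R -> R \subset trinodes T -> induced_connected R ->
  glued_on R f -> exists2 g : V -> A, g v0 = f v0 & glued_on (trinodes T) g.
Proof.
elim: m R f => [|m IH] R f hm v0R RT cR gR;
  have [sub|nsub] := boolP (trinodes T \subset R).
1,3: by exists f => //; case: gR => okR gR;
       split=> [v vT|v v' vT v'T]; [apply: okR | apply: gR]; rewrite ?(subsetP sub).
  by move: hm; rewrite leqn0 cards_eq0 setD_eq0 (negbTE nsub).
case: gR => okR gR.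
have R0 : R != set0 by apply/set0Pn; exists v0.
have [x [y [xR yR ty xy xuniq]]] := boundary_trinode R0 RT cR nsub.
have tx : trinode x by have := subsetP RT _ xR; rewrite inE.
have [a' oka' ga'] := ok_extend tx ty xy (okR x xR).
have yNR v : v \in R -> (v == y) = false by move=> vR; apply: contraNF yR => /eqP <-.
suff [g gv0 gg] : exists2 g : V -> A,
    g v0 = (if v0 == y then a' else f v0) & glued_on (trinodes T) g.
  by exists g; rewrite // gv0 yNR.
apply: (IH (y |: R) (fun v => if v == y then a' else f v)).
- have E : trinodes T :\: (y |: R) = (trinodes T :\: R) :\ y.
    by apply/setP => v; rewrite !inE negb_or andbA.
  have yD : y \in trinodes T :\: R by rewrite !inE yR ty.
  by move: hm (cardsD1 y (trinodes T :\: R)); rewrite E yD; lia.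
- by rewrite in_setU1 v0R orbT.
- by rewrite subUset sub1set inE ty RT.
- exact: induced_connected_setU1 cR xR xy.
- split=> [v /setU1P[->|vR]|v v' /setU1P[->|vR] /setU1P[->|v'R] vv'];
    rewrite ?eqxx ?yNR //; auto.
  + by rewrite adj_irr in vv'.
  + by rewrite (xuniq _ v'R vv'); apply: glue_sym.
  + by rewrite (xuniq _ vR) // adj_sym.
Qed.

Lemma propagate v0 a0 : trinode v0 -> ok v0 a0 ->
  exists2 g : V -> A, g v0 = a0 & glued_on (trinodes T) g.
Proof.
move=> t0 ok0; apply: (propagate_from (leqnn _) (set11 v0) _ (@induced_connected1 T v0)).
- by rewrite sub1set inE.
- by split=> [v /set1P ->|v v' /set1P -> /set1P ->]; rewrite ?adj_irr.
Qed.

End Propagation.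

Lemma card_subsets_gt1 (U : finType) (X : {set U}) :
  #|[set L : {set U} | (L \subset X) && (1 < #|L|)]| = 2 ^ #|X| - #|X| - 1.
Proof.
have E1 : [set L : {set U} | (L \subset X) && (1 < #|L|)] =
          powerset X :&: [set L : {set U} | 1 < #|L|] by apply/setP => L; rewrite !inE.
have E2 : powerset X :\: [set L : {set U} | 1 < #|L|] = set0 |: [set [set x] | x in X].
  apply/setP => L; rewrite !inE; apply/idP/idP.
    case/andP => L2 LX; move: L2; rewrite -ltnNge ltnS leq_eqVlt ltnS leqn0.
    case/orP => [/cards1P[x Lx]|]; last by rewrite cards_eq0 => ->.
    by apply/orP; right; apply/imsetP; exists x; rewrite // -sub1set -Lx.
  case/orP => [/eqP ->|/imsetP[x xX ->]]; first by rewrite cards0 sub0set.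
  by rewrite cards1 sub1set xX.
have := cardsID [set L : {set U} | 1 < #|L|] (powerset X).
rewrite E2 card_powerset cardsU1 card_in_imset; last by move=> x y _ _; apply: set1_inj.
have -> : (set0 : {set U}) \notin [set [set x] | x in X].
  by apply/imsetP => [[x _ E]]; move: (set11 x); rewrite -E inE.
by rewrite E1 => <- /=; lia.
Qed.

Section ProperSubtrees.
Variable T : tritree.
Local Notation V := (tv T).
Local Notation adj := (@tadj T).

Lemma in_sub_edges (S : {set V}) a b : ((a, b) \in sub_edges S) = induced S a b.
Proof. by rewrite inE. Qed.

Lemma connect_induced_mem (C : {set V}) a b : connect (induced C) a b -> a \in C -> b \in C.
Proof. by apply: (connect_propagate (P := fun v => v \in C)) => ? ? /and3P[]. Qed.

Lemma connect_induced_avoid (C : {set V}) a b x :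
  connect (induced C) a b -> ~~ connect (induced C) a x -> connect (induced (C :\ x)) a b.
Proof.
move=> /connectP[p ep ->] nx; apply/connectP; exists p => //.
have xp : x \notin a :: p by apply: contra nx => xp; apply: (path_connect ep xp).
apply: (sub_in_path (P := predC1 x)) ep; last first.
  by apply/allP => c cp; rewrite inE; apply: contraNneq xp => <-.
by move=> c d; rewrite !inE => cx dx /and3P[cd cC dC]; rewrite /induced cd !inE cx dx cC dC.
Qed.

Lemma induced_neighbour (C : {set V}) x : 1 < #|C| -> induced_connected C -> x \in C ->
  exists2 y, y \in C & adj x y.
Proof.
move=> /card_gt1P[a [b [aC bC ab]]] cC xC.
have [z zC zx] : exists2 z, z \in C & z != x.
  by case: (eqVneq a x) => [ax|]; [exists b; rewrite // -ax eq_sym | exists a].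
case/connectP: (cC _ _ xC zC) => [[|y p]] /=; first by move=> _ E; rewrite E eqxx in zx.
by case/andP => /and3P[xy _ yC] _ _; exists y.
Qed.

Lemma proper_neighbour (S : {set V}) x : proper_subtree S -> x \in S ->
  exists2 y, y \in S & adj x y.
Proof. by case=> S2 [cS _]; apply: induced_neighbour. Qed.

Lemma proper_two_neighbours (S : {set V}) x : proper_subtree S -> x \in S -> trinode x ->
  exists y z, [/\ y != z, y \in S, z \in S, adj x y & adj x z].
Proof.
move=> PS xS tx; have [y yS xy] := proper_neighbour PS xS.
have : 1 < #|[set y in S | adj x y]|.
  have [_ [_ lf]] := PS.
  have : 0 < #|[set y in S | adj x y]| by apply/card_gt0P; exists y; rewrite inE yS xy.
  by case E: #|_| => [|[|m]] // _; move: (lf x xS E); rewrite leafE tx.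
case/card_gt1P => [y' [z []]]; rewrite !inE => /andP[y'S xy'] /andP[zS xz] y'z.
by exists y', z.
Qed.

Lemma proper_has_trinode (S : {set V}) : 3 <= #|leaves T| -> proper_subtree S ->
  exists2 v, v \in S & trinode v.
Proof.
move=> n3 PS; have [/card_gt1P[x [_ [xS _ _]]] _] := PS.
have [y yS xy] := proper_neighbour PS xS.
have [tx|] := boolP (trinode x); first by exists x.
have [ty|] := boolP (trinode y); first by exists y.
by rewrite -!leafE => ly lx; have := leaves_nonadjacent n3 lx ly; rewrite xy.
Qed.

Definition reach (C : {set V}) (u : V) : {set V} := [set w | connect (induced C) u w].

Lemma reach_step (S : {set V}) (u prev u' : V) : adj u prev -> adj u u' -> u' != prev ->
  u \in S -> u' \in S -> reach (S :\ u) u' \proper reach (S :\ prev) u.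
Proof.
move=> up uu' u'p uS u'S; apply/properP; split.
  apply/subsetP => w; rewrite !inE => cw.
  have nprev : ~~ connect (induced (S :\ u)) u' prev.
    by apply: neighbours_disconnected uu' up u'p; rewrite !inE eqxx.
  apply: connect_trans (connect1 (_ : induced (S :\ prev) u u')) _.
    by rewrite /induced uu' !inE uS u'S u'p (adj_neq up).
  apply: connect_induced_sub (connect_induced_avoid cw nprev).
  by apply/subsetP => c; rewrite !inE => /and3P[-> _ ->].
exists u; rewrite !inE ?connect0 //; apply/negP => /connect_induced_mem.
by rewrite !in_setD1 eqxx u'S eq_sym (adj_neq uu') => /(_ isT).
Qed.

(* Induction on the part of [S] reachable from [u] without [prev], which
   shrinks when stepping away from [prev]. *)
Lemma leaf_beyond (S : {set V}) u prev : proper_subtree S ->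
  u \in S -> prev \in S -> adj prev u ->
  exists2 l, l \in S :&: leaves T & connect (induced (S :\ prev)) u l.
Proof.
move=> PS; have [m] := ubnP #|reach (S :\ prev) u|.
elim: m u prev => // m IH u prev hm uS pS pu.
have [lu|tu] := boolP (u \in leaves T); first by exists u; [rewrite inE uS lu | exact: connect0].
rewrite leafE negbK in tu.
have [y [z [yz yS zS uy uz]]] := proper_two_neighbours PS uS tu.
have [u' [u'S uu' u'p]] : exists u', [/\ u' \in S, adj u u' & u' != prev].
  by case: (eqVneq y prev) => [E|]; [exists z; rewrite -E eq_sym | exists y].
have up : adj u prev by rewrite adj_sym.
have lt := reach_step up uu' u'p uS u'S.
have [l lS cl] := IH u' u (leq_trans (proper_card lt) hm) u'S uS uu'.
by exists l => //; have := subsetP (proper_sub lt) l; rewrite !inE; apply.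
Qed.

(* A proper subtree is the convex hull of its leaves: an inner vertex outside a
   connected [C] containing these leaves would close a cycle through [C]. *)
Lemma proper_subtree_hull (S C : {set V}) : proper_subtree S -> induced_connected C ->
  S :&: leaves T \subset C -> S \subset C.
Proof.
move=> PS cC sub; apply/subsetP => x xS.
have [lx|tx] := boolP (x \in leaves T); first by apply: (subsetP sub); rewrite inE xS lx.
rewrite leafE negbK in tx.
have [y [z [yz yS zS xy xz]]] := proper_two_neighbours PS xS tx.
have [l1 l1S c1] := leaf_beyond PS yS xS xy.
have [l2 l2S c2] := leaf_beyond PS zS xS xz.
apply/negPn/negP => xC.
have SD : S :\ x \subset (S :\ x) :|: C := subsetUl _ _.
have CD : C \subset (S :\ x) :|: C := subsetUr _ _.
have xD : x \notin (S :\ x) :|: C by rewrite !inE eqxx (negbTE xC).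
have /negP := neighbours_disconnected xD xy xz yz; apply.
apply: connect_trans (connect_induced_sub SD c1) _.
have c12 := cC _ _ (subsetP sub _ l1S) (subsetP sub _ l2S).
apply: connect_trans (connect_induced_sub CD c12) _.
by rewrite (sym_connect_sym (induced_sym _)); apply: connect_induced_sub SD c2.
Qed.

Lemma proper_leaves_gt1 (S : {set V}) : proper_subtree S -> 1 < #|S :&: leaves T|.
Proof.
move=> PS; rewrite ltnNge; apply/negP => small.
have cL : induced_connected (S :&: leaves T).
  move=> a b aL bL; have -> : a = b by apply: (card_le1_eqP small).
  exact: connect0.
have := subset_leq_card (proper_subtree_hull PS cL (subxx _)).
by have [S2 _] := PS; move: S2 small; lia.
Qed.

Lemma proper_subtree_leaves_inj (S1 S2 : {set V}) : proper_subtree S1 -> proper_subtree S2 ->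
  S1 :&: leaves T = S2 :&: leaves T -> S1 = S2.
Proof.
move=> P1 P2 E; apply/eqP; rewrite eqEsubset.
rewrite (proper_subtree_hull P1 P2.2.1) ?E ?subsetIl //.
by rewrite (proper_subtree_hull P2 P1.2.1) -?E ?subsetIl.
Qed.

Lemma induced_connected_setD1 (C : {set V}) x : induced_connected C -> x \in C ->
  #|[set y in C | adj x y]| = 1 -> induced_connected (C :\ x).
Proof.
move=> cC xC /eqP/cards1P[y Ey].
have nbr u : u \in C -> adj x u -> u = y by move=> uC xu; apply/set1P; rewrite -Ey inE uC xu.
have toy a : a \in C :\ x -> connect (induced (C :\ x)) a y.
  rewrite in_setD1 => /andP[ax aC]; have nxx : ~~ (x != x) by rewrite negbK.
  have [u [_ [ux /negPn/eqP -> /and3P[ux' uC _] cu]]] :=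
    connect_exit (P := fun v => v != x) (cC _ _ aC xC) ax nxx.
  rewrite -(nbr u uC) 1?adj_sym //.
  apply: connect_sub cu => c d /= /and3P[/and3P[cd c_C d_C] cx dx].
  by apply: connect1; rewrite /induced cd !in_setD1 cx c_C dx d_C.
move=> a b aC bC; apply: connect_trans (toy a aC) _.
by rewrite (sym_connect_sym (induced_sym _)); apply: toy.
Qed.

(* Pruning dangling vertices outside [L] from the whole tree leaves the subtree
   spanned by [L]. *)
Lemma proper_subtree_of_leaves (L : {set V}) : L \subset leaves T -> 1 < #|L| ->
  exists S, proper_subtree S /\ S :&: leaves T = L.
Proof.
move=> LT L2.
suff prune (C : {set V}) : L \subset C -> induced_connected C ->
    exists S, proper_subtree S /\ S :&: leaves T = L.
  by apply: (prune setT); [exact: subsetT | move=> a b _ _; apply: connect_induced_setT].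
have [m] := ubnP #|C|; elim: m C => // m IH C Cm LC cC.
have C2 : 1 < #|C| := leq_trans L2 (subset_leq_card LC).
have [/existsP[x /and3P[xC xL /eqP d1]] | /existsPn nodangling] :=
  boolP [exists x, [&& x \in C, x \notin L & #|[set y in C | adj x y]| == 1]].
  apply: (IH (C :\ x)); last exact: induced_connected_setD1.
    by move: Cm (cardsD1 x C); rewrite xC; lia.
  apply/subsetP => l lL; rewrite in_setD1 (subsetP LC _ lL) andbT.
  by apply: contraNneq xL => <-.
have deg1L x : x \in C -> #|[set y in C | adj x y]| = 1 -> x \in L.
  by move=> xC d1; move: (nodangling x); rewrite xC d1 eqxx andbT negbK.
exists C; split.
  by split=> //; split=> // x xC d1; apply: (subsetP LT); apply: deg1L.
apply/setP => x; rewrite inE; apply/andP/idP => [[xC lx]|xL].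
  apply: deg1L => //; apply/eqP; rewrite eqn_leq; apply/andP; split.
    have : #|[set y in C | adj x y]| <= degree x.
      by apply: subset_leq_card; apply/subsetP => u; rewrite !inE => /andP[].
    by move: lx; rewrite inE => /eqP ->.
  by have [y yC xy] := induced_neighbour C2 cC xC; apply/card_gt0P; exists y; rewrite inE yC.
by rewrite (subsetP LC _ xL) (subsetP LT _ xL).
Qed.

Definition proper_subtreeb (S : {set V}) : bool :=
  [&& 1 < #|S|,
      [forall x, forall y, (x \in S) ==> (y \in S) ==> connect (induced S) x y] &
      [forall x, (x \in S) ==> (#|[set y in S | adj x y]| == 1) ==> (x \in leaves T)]].

Lemma proper_subtreeP S : reflect (proper_subtree S) (proper_subtreeb S).
Proof.
apply: (iffP and3P) => [[S2 /forallP cS /forallP lf]|[S2 [cS lf]]].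
  split=> //; split=> [x y xS yS|x xS d1].
    by move: (cS x) => /forallP /(_ y); rewrite xS yS.
  by move: (lf x); rewrite xS d1 eqxx.
split=> //; apply/forallP => x; first apply/forallP => y.
  by apply/implyP => xS; apply/implyP => yS; apply: cS.
by apply/implyP => xS; apply/implyP => /eqP d1; apply: lf.
Qed.

Lemma card_proper_subtrees : 3 <= #|leaves T| ->
  #|[set S : {set V} | proper_subtreeb S]| = 2 ^ #|leaves T| - #|leaves T| - 1.
Proof.
move=> n3; rewrite -card_subsets_gt1 -(@card_in_imset _ _ (fun S => S :&: leaves T)).
  apply: eq_card => L; rewrite [in RHS]inE; apply/imsetP/idP.
    by case=> S; rewrite inE => /proper_subtreeP PS ->; rewrite subsetIr proper_leaves_gt1.
  case/andP => LT L2; have [S [PS E]] := proper_subtree_of_leaves LT L2.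
  by exists S => //; rewrite inE; apply/proper_subtreeP.
move=> S1 S2; rewrite !inE => /proper_subtreeP P1 /proper_subtreeP P2.
exact: proper_subtree_leaves_inj.
Qed.

Lemma sub_edges_inj (S1 S2 : {set V}) : proper_subtree S1 -> proper_subtree S2 ->
  sub_edges S1 = sub_edges S2 -> S1 = S2.
Proof.
have sub (A B : {set V}) : proper_subtree A -> sub_edges A = sub_edges B -> A \subset B.
  move=> PA E; apply/subsetP => x xA; have [y yA xy] := proper_neighbour PA xA.
  have : (x, y) \in sub_edges A by rewrite in_sub_edges /induced xy xA yA.
  by rewrite E in_sub_edges => /and3P[].
by move=> P1 P2 E; apply/eqP; rewrite eqEsubset (sub _ _ P1 E) (sub _ _ P2 (esym E)).
Qed.

End ProperSubtrees.

Arguments ent : simpl never.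

Definition bz_of_seq (l : seq nat) : bz := [ffun j : 'I_9 => nth 0 l j].

Lemma ent_bz_of_seq l j : j < 9 -> ent (bz_of_seq l) j = nth 0 l j.
Proof. by move=> hj; rewrite /ent ffunE inordK. Qed.

Lemma ent_ord (t : bz) (j : 'I_9) : ent t j = t j.
Proof. by rewrite /ent inord_val. Qed.

Lemma ent_zero j : ent zero_bz j = 0.
Proof. by rewrite /ent ffunE. Qed.

Lemma bz_ext (t u : bz) : (forall j, j < 9 -> ent t j = ent u j) -> t = u.
Proof. by move=> E; apply/ffunP => j; rewrite -!ent_ord E. Qed.

Lemma bz_ext9 (t u : bz) :
  ent t 0 = ent u 0 -> ent t 1 = ent u 1 -> ent t 2 = ent u 2 ->
  ent t 3 = ent u 3 -> ent t 4 = ent u 4 -> ent t 5 = ent u 5 ->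
  ent t 6 = ent u 6 -> ent t 7 = ent u 7 -> ent t 8 = ent u 8 -> t = u.
Proof.
move=> ? ? ? ? ? ? ? ? ?; apply: bz_ext => j hj.
by do 9 (case: j hj => [|j] hj; first by []).
Qed.

Definition side_sums (f : nat -> nat) (k : nat) : nat * nat :=
  match k with
  | 0 => (f 0 + f 1, f 3 + f 5)
  | 1 => (f 5 + f 6, f 7 + f 8)
  | _ => (f 8 + f 4, f 2 + f 0)
  end.

Lemma bweightE t (k : 'I_3) : bweight t k = side_sums (ent t) k.
Proof. by rewrite /bweight /side_idx; case: k => [[|[|[|m]]] hm]. Qed.

Lemma bweight_zero k : bweight zero_bz k = (0, 0).
Proof. by rewrite bweightE; case: k => [[|[|[|m]]] hm]; rewrite /= !ent_zero. Qed.

Lemma hexagonE t : hexagon t <->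
  [/\ ent t 1 + ent t 2 = ent t 6 + ent t 7, ent t 2 + ent t 4 = ent t 3 + ent t 6
    & ent t 4 + ent t 7 = ent t 1 + ent t 3].
Proof.
split=> [/and3P[/eqP ? /eqP ? /eqP ?] // | [h1 h2 h3]].
by rewrite /hexagon h1 h2 h3 !eqxx.
Qed.

Lemma hexagon_zero : hexagon zero_bz.
Proof. by rewrite /hexagon !ent_zero. Qed.

Definition bz_le (g t : bz) := forall j, j < 9 -> ent g j <= ent t j.

Lemma bz_le_entries g t : bz_le g t ->
  [/\ ent g 0 <= ent t 0, ent g 1 <= ent t 1 & ent g 2 <= ent t 2] /\
  [/\ ent g 3 <= ent t 3, ent g 4 <= ent t 4 & ent g 5 <= ent t 5] /\
  [/\ ent g 6 <= ent t 6, ent g 7 <= ent t 7 & ent g 8 <= ent t 8].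
Proof. by move=> le; do !split; apply: le. Qed.

Lemma bz_le0 t : bz_le zero_bz t.
Proof. by move=> j _; rewrite ent_zero. Qed.

Lemma bz_le0_eq t : bz_le t zero_bz -> t = zero_bz.
Proof. by move=> le; apply: bz_ext => j hj; have := le j hj; rewrite !ent_zero; lia. Qed.

Lemma bweight_le g t k : bz_le g t ->
  (bweight g k).1 <= (bweight t k).1 /\ (bweight g k).2 <= (bweight t k).2.
Proof.
move=> /bz_le_entries[[? ? ?] [[? ? ?] [? ? ?]]]; rewrite !bweightE.
by case: k => [[|[|[|m]]] hm] //=; lia.
Qed.

Definition bz_sub (t g : bz) : bz := [ffun j => t j - g j].

Lemma ent_bz_sub t g j : ent (bz_sub t g) j = ent t j - ent g j.
Proof. by rewrite /ent ffunE. Qed.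

Lemma bweight_sub t g k : bz_le g t ->
  bweight (bz_sub t g) k = ((bweight t k).1 - (bweight g k).1, (bweight t k).2 - (bweight g k).2).
Proof.
move=> /bz_le_entries[[? ? ?] [[? ? ?] [? ? ?]]]; rewrite !bweightE.
by case: k => [[|[|[|m]]] hm] //=; rewrite !ent_bz_sub; congr pair; lia.
Qed.

Lemma hexagon_sub t g : hexagon t -> hexagon g -> bz_le g t -> hexagon (bz_sub t g).
Proof.
move=> /hexagonE[? ? ?] /hexagonE[? ? ?] /bz_le_entries[[? ? ?] [[? ? ?] [? ? ?]]].
by apply/hexagonE; rewrite !ent_bz_sub; split; lia.
Qed.

Definition side_nz (t : bz) (k : 'I_3) := bweight t k != (0, 0).

Lemma side_nz_swap g g' k k' :
  bweight g k = swap_pair (bweight g' k') -> side_nz g k = side_nz g' k'.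
Proof. by rewrite /side_nz => ->; case: (bweight g' k') => [[|?] [|?]]. Qed.

Lemma side_pos_of_nz t : t <> zero_bz ->
  exists k b, 0 < (if b then (bweight t k).1 else (bweight t k).2).
Proof.
move=> nz; pose k1 := @Ordinal 3 1 isT; pose k2 := @Ordinal 3 2 isT.
case: (posnP (ent t 0 + ent t 1)) => ?; last by exists ord0, true; rewrite bweightE.
case: (posnP (ent t 3 + ent t 5)) => ?; last by exists ord0, false; rewrite bweightE.
case: (posnP (ent t 5 + ent t 6)) => ?; last by exists k1, true; rewrite bweightE.
case: (posnP (ent t 7 + ent t 8)) => ?; last by exists k1, false; rewrite bweightE.
case: (posnP (ent t 8 + ent t 4)) => ?; last by exists k2, true; rewrite bweightE.
case: (posnP (ent t 2 + ent t 0)) => ?; last by exists k2, false; rewrite bweightE.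
by case: nz; apply: bz_ext9; rewrite !ent_zero; lia.
Qed.

(* The eight nonzero BZ triangles that are not sums of two nonzero ones, named
   after their nonzero entries (all equal to 1). *)
Inductive elem := Ea | Ef | Ei | Ede | Ecg | Ebh | Ebeg | Ecdh.

Definition elem_entries (i : elem) : seq nat :=
  match i with
  | Ea => [:: 1;0;0;0;0;0;0;0;0]
  | Ef => [:: 0;0;0;0;0;1;0;0;0]
  | Ei => [:: 0;0;0;0;0;0;0;0;1]
  | Ede => [:: 0;0;0;1;1;0;0;0;0]
  | Ecg => [:: 0;0;1;0;0;0;1;0;0]
  | Ebh => [:: 0;1;0;0;0;0;0;1;0]
  | Ebeg => [:: 0;1;0;0;1;0;1;0;0]
  | Ecdh => [:: 0;0;1;1;0;0;0;1;0]
  end.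

Definition elem_bz i := bz_of_seq (elem_entries i).

Lemma ent_elem i j : j < 9 -> ent (elem_bz i) j = nth 0 (elem_entries i) j.
Proof. exact: ent_bz_of_seq. Qed.

Lemma bweight_elem i k : bweight (elem_bz i) k = side_sums (nth 0 (elem_entries i)) k.
Proof. by rewrite bweightE; case: k => [[|[|[|m]]] hm] //=; rewrite !ent_elem. Qed.

Lemma hexagon_elem i : hexagon (elem_bz i).
Proof. by case: i; rewrite /hexagon !ent_elem. Qed.

Definition unit_wt (b : bool) : nat * nat := if b then (1, 0) else (0, 1).

Lemma swap_unit_wt b : swap_pair (unit_wt (~~ b)) = unit_wt b.
Proof. by case: b. Qed.

Lemma bweight_elem_cases i k :
  [\/ bweight (elem_bz i) k = (0, 0), bweight (elem_bz i) k = unit_wt true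
    | bweight (elem_bz i) k = unit_wt false].
Proof.
by rewrite bweight_elem; case: i; case: k => [[|[|[|m]]] hm];
  first [exact: Or31 | exact: Or32 | exact: Or33 | done].
Qed.

Lemma elem_two_sides i : exists k k', [/\ k != k', side_nz (elem_bz i) k & side_nz (elem_bz i) k'].
Proof.
pose k0 := @Ordinal 3 0 isT; pose k1 := @Ordinal 3 1 isT; pose k2 := @Ordinal 3 2 isT.
by case: i; [exists k0, k2 | exists k0, k1 | exists k1, k2 | exists k0, k2
           | exists k1, k2 | exists k0, k1 | exists k0, k1 | exists k0, k1];
  rewrite /side_nz !bweight_elem.
Qed.

Lemma elem_neq0 i : elem_bz i <> zero_bz.
Proof.
move=> E; have [k [_ [_ nz _]]] := elem_two_sides i.
by move: nz; rewrite /side_nz E bweight_zero.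
Qed.

Lemma elem_bz_le i t :
  nth 0 (elem_entries i) 0 <= ent t 0 -> nth 0 (elem_entries i) 1 <= ent t 1 ->
  nth 0 (elem_entries i) 2 <= ent t 2 -> nth 0 (elem_entries i) 3 <= ent t 3 ->
  nth 0 (elem_entries i) 4 <= ent t 4 -> nth 0 (elem_entries i) 5 <= ent t 5 ->
  nth 0 (elem_entries i) 6 <= ent t 6 -> nth 0 (elem_entries i) 7 <= ent t 7 ->
  nth 0 (elem_entries i) 8 <= ent t 8 -> bz_le (elem_bz i) t.
Proof.
move=> ? ? ? ? ? ? ? ? ? j hj; rewrite ent_elem //.
by do 9 (case: j hj => [|j] hj; first by []).
Qed.

(* The hexagon relations force either the corner entry of that coordinate or a
   suitable entry of the hexagon to be positive. *)
Lemma elem_le_unit_side t (k : 'I_3) (b : bool) : hexagon t ->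
  0 < (if b then (bweight t k).1 else (bweight t k).2) ->
  exists i, bz_le (elem_bz i) t /\ bweight (elem_bz i) k = unit_wt b.
Proof.
case/hexagonE => h1 h2 h3; rewrite bweightE.
have fit i : bz_le (elem_bz i) t -> bweight (elem_bz i) k = unit_wt b ->
  exists i, bz_le (elem_bz i) t /\ bweight (elem_bz i) k = unit_wt b.
  by move=> *; exists i.
case: k fit => [[|[|[|m]]] hm] // fit; case: b fit => fit /= pos.
- case: (posnP (ent t 0)) => ?; first case: (posnP (ent t 7)) => ?.
  + by apply: (fit Ebeg); [apply: elem_bz_le => /=; lia | rewrite bweight_elem].
  + by apply: (fit Ebh); [apply: elem_bz_le => /=; lia | rewrite bweight_elem].
  + by apply: (fit Ea); [apply: elem_bz_le => /=; lia | rewrite bweight_elem].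
- case: (posnP (ent t 5)) => ?; first case: (posnP (ent t 4)) => ?.
  + by apply: (fit Ecdh); [apply: elem_bz_le => /=; lia | rewrite bweight_elem].
  + by apply: (fit Ede); [apply: elem_bz_le => /=; lia | rewrite bweight_elem].
  + by apply: (fit Ef); [apply: elem_bz_le => /=; lia | rewrite bweight_elem].
- case: (posnP (ent t 5)) => ?; first case: (posnP (ent t 2)) => ?.
  + by apply: (fit Ebeg); [apply: elem_bz_le => /=; lia | rewrite bweight_elem].
  + by apply: (fit Ecg); [apply: elem_bz_le => /=; lia | rewrite bweight_elem].
  + by apply: (fit Ef); [apply: elem_bz_le => /=; lia | rewrite bweight_elem].
- case: (posnP (ent t 8)) => ?; first case: (posnP (ent t 1)) => ?.
  + by apply: (fit Ecdh); [apply: elem_bz_le => /=; lia | rewrite bweight_elem].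
  + by apply: (fit Ebh); [apply: elem_bz_le => /=; lia | rewrite bweight_elem].
  + by apply: (fit Ei); [apply: elem_bz_le => /=; lia | rewrite bweight_elem].
- case: (posnP (ent t 8)) => ?; first case: (posnP (ent t 3)) => ?.
  + by apply: (fit Ebeg); [apply: elem_bz_le => /=; lia | rewrite bweight_elem].
  + by apply: (fit Ede); [apply: elem_bz_le => /=; lia | rewrite bweight_elem].
  + by apply: (fit Ei); [apply: elem_bz_le => /=; lia | rewrite bweight_elem].
- case: (posnP (ent t 0)) => ?; first case: (posnP (ent t 6)) => ?.
  + by apply: (fit Ecdh); [apply: elem_bz_le => /=; lia | rewrite bweight_elem].
  + by apply: (fit Ecg); [apply: elem_bz_le => /=; lia | rewrite bweight_elem].
  + by apply: (fit Ea); [apply: elem_bz_le => /=; lia | rewrite bweight_elem].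
Qed.

Lemma hexagon_le_elem t i : hexagon t -> bz_le t (elem_bz i) -> t = zero_bz \/ t = elem_bz i.
Proof.
case/hexagonE => h1 h2 h3 /bz_le_entries[[e0 e1 e2] [[e3 e4 e5] [e6 e7 e8]]].
move: h1 h2 h3; rewrite !ent_elem // in e0 e1 e2 e3 e4 e5 e6 e7 e8 *.
case: i e0 e1 e2 e3 e4 e5 e6 e7 e8 => /= *; (have [s0|spos] := posnP
  (ent t 0 + ent t 1 + ent t 2 + ent t 3 + ent t 4 + ent t 5 + ent t 6 + ent t 7 + ent t 8);
  [left; apply: bz_ext9; rewrite ?ent_zero; lia
  |right; apply: bz_ext9; rewrite ?ent_elem //=; lia]).
Qed.

Lemma ord3_cases (k : 'I_3) :
  [\/ k = @Ordinal 3 0 isT, k = @Ordinal 3 1 isT | k = @Ordinal 3 2 isT].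
Proof.
by case: k => [[|[|[|?]]] ?]; [apply: Or31 | apply: Or32 | apply: Or33 |]; try apply: val_inj.
Qed.

Ltac elem_fits := split;
  [by case=> [[|[|[|?]]] ?] //; rewrite /side_nz bweight_elem | by rewrite bweight_elem].

Lemma elem_with_sides (p : 'I_3 -> bool) k b : p k ->
  (exists k1 k2, [/\ k1 != k2, p k1 & p k2]) ->
  exists i, (forall k', side_nz (elem_bz i) k' = p k') /\ bweight (elem_bz i) k = unit_wt b.
Proof.
pose k0 := @Ordinal 3 0 isT; pose k1 := @Ordinal 3 1 isT; pose k2 := @Ordinal 3 2 isT.
have pE k' : p k' = nth false [:: p k0; p k1; p k2] k' by case: (ord3_cases k') => ->.
move=> pk [c [c' [cc' pc pc']]].
have two : 1 < p k0 + p k1 + p k2.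
  by move: cc' pc pc'; case: (ord3_cases c) => ->; case: (ord3_cases c') => ->;
    case: (p k0); case: (p k1); case: (p k2).
suff [i [Hs Hb]] : exists i, (forall k', side_nz (elem_bz i) k' =
    nth false [:: p k0; p k1; p k2] k') /\ bweight (elem_bz i) k = unit_wt b.
  by exists i; split=> // k'; rewrite Hs -pE.
move: two; rewrite pE in pk; move: pk.
case: (p k0); case: (p k1); case: (p k2); case: k => [[|[|[|?]]] ?] //; case: b => /= pk two;
 first [ done | exists Ea; elem_fits | exists Ef; elem_fits | exists Ei; elem_fits
       | exists Ede; elem_fits | exists Ecg; elem_fits | exists Ebh; elem_fits
       | exists Ebeg; elem_fits | exists Ecdh; elem_fits ].
Qed.

Lemma elem_eq_of_side i i' k :
  (forall k', side_nz (elem_bz i) k' = side_nz (elem_bz i') k') ->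
  side_nz (elem_bz i) k -> bweight (elem_bz i) k = bweight (elem_bz i') k ->
  elem_bz i = elem_bz i'.
Proof.
move=> H; move: (H (@Ordinal 3 0 isT)) (H (@Ordinal 3 1 isT)) (H (@Ordinal 3 2 isT)).
clear H.
rewrite /side_nz !bweight_elem; case: k => [[|[|[|m]]] hm] //=.
all: by case: i; case: i'.
Qed.

Section Semigroup.
Variable T : tritree.
Local Notation V := (tv T).
Local Notation adj := (@tadj T).

Definition bz_glued (v v' : V) (g g' : bz) :=
  forall k k', tside v k = v' -> tside v' k' = v -> bweight g k = swap_pair (bweight g' k').

Lemma bz_glued_sym (v v' : V) g g' : bz_glued v v' g g' -> bz_glued v' v g' g.
Proof. by move=> gl k k' e1 e2; rewrite (gl k' k e2 e1) swap_pairK. Qed.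

Lemma bz_gluedI (v v' : V) k k' g g' : trinode v -> trinode v' ->
  tside v k = v' -> tside v' k' = v -> bweight g k = swap_pair (bweight g' k') ->
  bz_glued v v' g g'.
Proof.
move=> tv tv' e1 e2 E kk kk' f1 f2.
have -> : kk = k by apply: (tside_injective tv); rewrite f1 e1.
by have -> : kk' = k' by apply: (tside_injective tv'); rewrite f2 e2.
Qed.

Lemma inQ_zero (w : assignment T) v : inQ w -> ~~ trinode v -> w v = zero_bz.
Proof. by case=> z _; apply: z. Qed.

Lemma inQ_hexagon (w : assignment T) v : inQ w -> trinode v -> hexagon (w v).
Proof. by case=> _ [h _]; apply: h. Qed.

Lemma inQ_glued (w : assignment T) v v' : inQ w -> trinode v -> trinode v' -> adj v v' ->
  bz_glued v v' (w v) (w v').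
Proof. by move=> [_ [_ gl]] tv tv' _ k k'; apply: gl. Qed.

Lemma inQ_trinode (w : assignment T) v : inQ w -> w v <> zero_bz -> trinode v.
Proof. by move=> Qw nz; apply/negPn/negP => /(inQ_zero Qw). Qed.

Lemma inQI (g : assignment T) :
  (forall v, ~~ trinode v -> g v = zero_bz) ->
  (forall v, trinode v -> hexagon (g v)) ->
  (forall v v', trinode v -> trinode v' -> adj v v' -> bz_glued v v' (g v) (g v')) -> inQ g.
Proof.
move=> gz gh gl; do 2!split => //; move=> v v' k k' tv tv' e1 e2.
by apply: gl => //; rewrite -e1 adj_tside.
Qed.

Lemma propagate_inQ (ok : V -> bz -> Prop) v0 a0 :
  (forall v a, ok v a -> hexagon a) ->
  (forall v v' a, trinode v -> trinode v' -> adj v v' -> ok v a ->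
     exists2 a', ok v' a' & bz_glued v v' a a') ->
  trinode v0 -> ok v0 a0 ->
  exists w : assignment T, [/\ inQ w, w v0 = a0 & forall v, trinode v -> ok v (w v)].
Proof.
move=> okh ext t0 ok0.
have [g g0 [okg glg]] := propagate bz_glued_sym ext t0 ok0.
have okg' v : trinode v -> ok v (g v) by move=> tv; apply: okg; rewrite inE.
exists [ffun v => if trinode v then g v else zero_bz]; split.
- apply: inQI => [v /negbTE|v|v v' tv tv' vv']; rewrite !ffunE ?tv ?tv' //.
    by move=> ->.
  + by move=> tv; rewrite tv; apply: okh (okg' _ tv).
  + by apply: glg; rewrite ?inE.
- by rewrite ffunE t0.
- by move=> v tv; rewrite ffunE tv; apply: okg'.
Qed.

Definition assign_sub (w g : assignment T) : assignment T :=
  [ffun v => bz_sub (w v) (g v)].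
Definition assign_le (g w : assignment T) := forall v, bz_le (g v) (w v).

Lemma ent_add_assign (w u : assignment T) v j :
  ent (add_assign w u v) j = ent (w v) j + ent (u v) j.
Proof. by rewrite /ent !ffunE. Qed.

Lemma bz_le_add_assign (u u' : assignment T) v : bz_le (u v) (add_assign u u' v).
Proof. by move=> j hj; rewrite ent_add_assign; lia. Qed.

Lemma inQ_sub (w g : assignment T) : inQ w -> inQ g -> assign_le g w -> inQ (assign_sub w g).
Proof.
move=> Qw Qg le; apply: inQI => [v tv|v tv|v v' tv tv' vv'].
- by rewrite ffunE (inQ_zero Qw) // (inQ_zero Qg) //; apply/ffunP => j; rewrite !ffunE.
- by rewrite ffunE; apply: hexagon_sub; rewrite ?inQ_hexagon.
- move=> k k' e1 e2; rewrite !ffunE !bweight_sub //.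
  by rewrite (inQ_glued Qw tv tv' vv' e1 e2) (inQ_glued Qg tv tv' vv' e1 e2).
Qed.

Lemma assign_subK (w g : assignment T) : assign_le g w -> w = add_assign g (assign_sub w g).
Proof.
move=> le; apply/ffunP => v; apply: bz_ext => j hj.
by rewrite ent_add_assign ffunE ent_bz_sub; have := le v j hj; lia.
Qed.

Lemma assign_neq0 (w : assignment T) : w <> zero_assign T -> exists v, w v <> zero_bz.
Proof.
move=> nz; have [/existsP[v /eqP] | /existsPn all0] := boolP [exists v, w v != zero_bz].
  by exists v.
by case: nz; apply/ffunP => v; rewrite ffunE; apply/eqP; rewrite -[_ == _]negbK all0.
Qed.

Lemma min_gen_indecomposable (w u u' : assignment T) : min_gen w -> inQ u -> inQ u' ->
  w = add_assign u u' -> u = zero_assign T \/ u' = zero_assign T.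
Proof.
move=> [_ [_ nd]] Qu Qu' E.
have [->|nu] := eqVneq u (zero_assign T); first by left.
have [->|nu'] := eqVneq u' (zero_assign T); first by right.
by case: nd; exists u, u'; do !split => //; apply/eqP.
Qed.

Definition is_elem0 (t : bz) := t = zero_bz \/ exists i, t = elem_bz i.

Lemma hexagon_elem0 t : is_elem0 t -> hexagon t.
Proof. by case=> [->|[i ->]]; [exact: hexagon_zero | exact: hexagon_elem]. Qed.

Lemma elem_below_glue (w : assignment T) v v' a : inQ w ->
  trinode v -> trinode v' -> adj v v' -> bz_le a (w v) /\ is_elem0 a ->
  exists2 a', bz_le a' (w v') /\ is_elem0 a' & bz_glued v v' a a'.
Proof.
move=> Qw tv tv' vv' [lea ea]; have [k [k' [e1 e2]]] := tside_edge tv tv' vv'.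
have glue_to a' : bweight a k = swap_pair (bweight a' k') -> bz_glued v v' a a'.
  exact: bz_gluedI.
have [Ea|Ea] : bweight a k = (0, 0) \/ exists b, bweight a k = unit_wt b.
- case: ea => [->|[i ->]]; first by left; rewrite bweight_zero.
  by case: (bweight_elem_cases i k) => E; [left | right; exists true | right; exists false].
- exists zero_bz; first by split; [exact: bz_le0 | left].
  by apply: glue_to; rewrite Ea bweight_zero.
case: Ea => b Ea; have [l1 l2] := bweight_le k lea.
have pos : 0 < (if ~~ b then (bweight (w v') k').1 else (bweight (w v') k').2).
  by move: l1 l2; rewrite Ea (inQ_glued Qw tv tv' vv' e1 e2); case: b {Ea} => /=; lia.
have [i' [le' E']] := elem_le_unit_side (inQ_hexagon Qw tv') pos.
exists (elem_bz i'); first by split=> //; right; exists i'.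
by apply: glue_to; rewrite Ea E' swap_unit_wt.
Qed.

Lemma min_gen_elem0 (w : assignment T) : min_gen w -> forall v, is_elem0 (w v).
Proof.
move=> mg; have [Qw [nz _]] := mg.
have [v0 nz0] := assign_neq0 nz; have t0 := inQ_trinode Qw nz0.
have [k [b pos]] := side_pos_of_nz nz0.
have [i0 [le0 _]] := elem_le_unit_side (inQ_hexagon Qw t0) pos.
have [g [Qg g0 okg]] := @propagate_inQ (fun v a => bz_le a (w v) /\ is_elem0 a) v0
  (elem_bz i0) (fun v a ok => hexagon_elem0 ok.2) (fun v v' a => elem_below_glue Qw)
  t0 (conj le0 (or_intror (ex_intro _ i0 erefl))).
have leg : assign_le g w.
  move=> v; have [tv|ntv] := boolP (trinode v); first by case: (okg v tv).
  by rewrite (inQ_zero Qg ntv); apply: bz_le0.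
case: (min_gen_indecomposable mg Qg (inQ_sub Qw Qg leg) (assign_subK leg)) => E.
  by have := @elem_neq0 i0; rewrite -g0 E ffunE.
have -> : w = g.
  rewrite [LHS](assign_subK leg) E; apply/ffunP => v; apply/ffunP => j.
  by rewrite !ffunE addn0.
move=> v.
have [tv|ntv] := boolP (trinode v); first by case: (okg v tv).
by left; apply: inQ_zero.
Qed.

End Semigroup.

Section Support.
Variable T : tritree.
Local Notation V := (tv T).
Local Notation adj := (@tadj T).

Definition supp_edge (w : assignment T) : rel V :=
  fun x y => adj x y && (nz_from w x y || nz_from w y x).
Definition supp_set (w : assignment T) : {set V} := [set x | [exists y, supp_edge w x y]].

Lemma supp_edge_sym w : symmetric (supp_edge w).
Proof. by move=> x y; rewrite /supp_edge adj_sym orbC. Qed.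

Lemma supp_set_l w x y : supp_edge w x y -> x \in supp_set w.
Proof. by move=> xy; rewrite inE; apply/existsP; exists y. Qed.

Lemma supp_set_r w x y : supp_edge w x y -> y \in supp_set w.
Proof. by rewrite supp_edge_sym; apply: supp_set_l. Qed.

Lemma in_bz_support w a b : ((a, b) \in bz_support w) = supp_edge w a b.
Proof. by rewrite inE. Qed.

Lemma nz_fromE (w : assignment T) x y k : trinode x -> tside x k = y ->
  nz_from w x y = side_nz (w x) k.
Proof.
move=> tx e; apply/existsP/idP => [[kk /andP[/eqP ek nz]]|nz].
  by have <- : kk = k by apply: (tside_injective tx); rewrite ek e.
by exists k; rewrite e eqxx.
Qed.

Lemma nz_from_neq0 (w : assignment T) x y : nz_from w x y -> w x <> zero_bz.
Proof. by case/existsP => k /andP[_ nz] E; move: nz; rewrite E /side_nz bweight_zero. Qed.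

Lemma nz_from_leaf (w : assignment T) x y : inQ w -> ~~ trinode x -> nz_from w x y = false.
Proof.
move=> Qw tx; apply/negbTE/negP => nzf.
exact: (nz_from_neq0 nzf (inQ_zero Qw tx)).
Qed.

Lemma nz_fromC (w : assignment T) x y : inQ w -> trinode x -> trinode y -> adj x y ->
  nz_from w x y = nz_from w y x.
Proof.
move=> Qw tx ty xy; have [k [k' [e1 e2]]] := tside_edge tx ty xy.
rewrite (nz_fromE _ tx e1) (nz_fromE _ ty e2).
exact/side_nz_swap/(inQ_glued Qw tx ty xy e1 e2).
Qed.

Lemma supp_edge_tside (w : assignment T) v k : trinode v -> side_nz (w v) k ->
  supp_edge w v (tside v k).
Proof. by move=> tv nz; rewrite /supp_edge adj_tside // (nz_fromE _ tv erefl) nz. Qed.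

Lemma supp_set_neq0 (w : assignment T) x : inQ w -> trinode x -> x \in supp_set w ->
  w x <> zero_bz.
Proof.
move=> Qw tx; rewrite inE => /existsP[z /andP[xz /orP[nz|nz]]]; first exact: nz_from_neq0 nz.
have tz : trinode z by apply: contraLR nz => ntz; rewrite nz_from_leaf.
by apply: (@nz_from_neq0 _ _ z); rewrite (nz_fromC Qw tx tz xz).
Qed.

Lemma inQ_restrict (w : assignment T) (C : pred V) : inQ w ->
  (forall a b, supp_edge w a b -> C a = C b) -> inQ [ffun v => if C v then w v else zero_bz].
Proof.
move=> Qw cl; apply: inQI => [v tv|v tv|v v' tv tv' vv']; rewrite !ffunE.
- by case: (C v); rewrite ?(inQ_zero Qw).
- by case: (C v); [exact: inQ_hexagon | exact: hexagon_zero].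
have [k [k' [e1 e2]]] := tside_edge tv tv' vv'.
apply: (bz_gluedI tv tv' e1 e2); have gl := inQ_glued Qw tv tv' vv' e1 e2.
case Cv: (C v); case Cv': (C v'); rewrite ?bweight_zero //.
all: have : ~~ supp_edge w v v' by apply/negP => /cl; rewrite Cv Cv'.
all: rewrite /supp_edge vv' negb_or (nz_fromE _ tv e1) (nz_fromE _ tv' e2) /side_nz.
  by case/andP => /negbNE/eqP ->.
by case/andP => _ /negbNE/eqP ->.
Qed.

(* Otherwise restricting [w] to the component of [x] splits it. *)
Lemma min_gen_supp_connected (w : assignment T) : min_gen w ->
  forall x y, x \in supp_set w -> y \in supp_set w -> connect (supp_edge w) x y.
Proof.
move=> mg x y; have [Qw [nz _]] := mg.
pose C v := connect (supp_edge w) x v.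
have clC a b : supp_edge w a b -> C a = C b.
  move=> ab; apply/idP/idP => H; first exact: connect_trans H (connect1 ab).
  by apply: connect_trans H (connect1 _); rewrite supp_edge_sym.
have clN a b : supp_edge w a b -> (predC C) a = (predC C) b by move=> /clC /= ->.
have wE : w = add_assign [ffun v => if C v then w v else zero_bz]
                         [ffun v => if (predC C) v then w v else zero_bz].
  apply/ffunP => v; apply/ffunP => j; rewrite !ffunE /=.
  by case: (C v); rewrite ffunE ?addn0.
have supp_nz a b : supp_edge w a b -> exists2 q, w q <> zero_bz & (q = a \/ q = b).
  move=> /andP[_ /orP[nzf|nzf]]; [exists a | exists b];
    by [apply: nz_from_neq0 nzf | auto].
rewrite !inE => /existsP[x' xx'] /existsP[y' yy'].
case: (min_gen_indecomposable mg (inQ_restrict Qw clC) (inQ_restrict Qw clN) wE) => /ffunP E.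
  have [q nq Hq] := supp_nz _ _ xx'; case: nq; move: (E q); rewrite !ffunE.
  by case: Hq => ->; rewrite /C ?connect0 ?connect1.
have [q nq Hq] := supp_nz _ _ yy'.
have Cq : C q by apply/negPn/negP => nCq; case: nq; move: (E q); rewrite !ffunE /= nCq.
by case: Hq Cq => ->; [|rewrite -(clC _ _ yy')].
Qed.

Lemma min_gen_proper_support (w : assignment T) : min_gen w ->
  proper_subtree (supp_set w) /\ bz_support w = sub_edges (supp_set w).
Proof.
move=> mg; have el := min_gen_elem0 mg; have cn := min_gen_supp_connected mg.
have [Qw [nz _]] := mg.
have two_sides x : w x <> zero_bz ->
    exists k k', [/\ k != k', side_nz (w x) k & side_nz (w x) k'].
  by case: (el x) => [->//|[i ->] _]; apply: elem_two_sides.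
have supp_induced : subrel (supp_edge w) (induced (supp_set w)).
  by move=> a b ab; rewrite /induced (supp_set_l ab) (supp_set_r ab) !andbT; case/andP: ab.
split; [split; [|split] |].
- have [v0 nz0] := assign_neq0 nz; have t0 := inQ_trinode Qw nz0.
  have [k [_ [_ nzk _]]] := two_sides _ nz0; have E := supp_edge_tside t0 nzk.
  apply/card_gt1P; exists v0, (tside v0 k).
  by rewrite (supp_set_l E) (supp_set_r E) adj_neq ?adj_tside.
- by move=> x y xS yS; apply: connect_sub (cn _ _ xS yS) => a b /supp_induced /connect1.
- move=> x xS d1; rewrite leafE; apply/negP => tx.
  have [k [k' [kk' nzk nzk']]] := two_sides _ (supp_set_neq0 Qw tx xS).
  have E := supp_edge_tside tx nzk; have E' := supp_edge_tside tx nzk'.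
  suff : 1 < #|[set y in supp_set w | adj x y]| by rewrite d1.
  apply/card_gt1P; exists (tside x k), (tside x k').
  rewrite inE (supp_set_r E) adj_tside // inE (supp_set_r E') adj_tside //; split=> //.
  by apply: contra kk' => /eqP /(tside_injective tx) ->.
- apply/setP => [[a b]]; rewrite in_bz_support in_sub_edges.
  apply/idP/idP => [/supp_induced // | /and3P[ab aS bS]].
  by apply: connect_adj_edge (cn _ _ aS bS) ab => ? ? /andP[].
Qed.

End Support.

Section GivenSupport.
Variables (T : tritree) (S : {set tv T}).
Local Notation V := (tv T).
Local Notation adj := (@tadj T).
Hypothesis PS : proper_subtree S.

Definition inner_side (v : V) (k : 'I_3) := (v \in S) && (tside v k \in S).

Definition elem_on (v : V) (a : bz) := is_elem0 a /\ forall k, side_nz a k = inner_side v k.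

Lemma elem_on_out v a : elem_on v a -> v \notin S -> a = zero_bz.
Proof.
move=> [[//|[i ->]] sides] vS; have [k [_ [_ nz _]]] := elem_two_sides i.
by move: nz; rewrite sides /inner_side (negbTE vS).
Qed.

Lemma elem_on_inner v a k : elem_on v a -> inner_side v k -> exists i, a = elem_bz i.
Proof. by move=> [[->|//] sides]; rewrite -sides /side_nz bweight_zero. Qed.

Lemma inner_sides_two v : v \in S -> trinode v ->
  exists k1 k2, [/\ k1 != k2, inner_side v k1 & inner_side v k2].
Proof.
move=> vS tv; have [y [z [yz yS zS vy vz]]] := proper_two_neighbours PS vS tv.
have [k1 e1] := tside_onto tv vy; have [k2 e2] := tside_onto tv vz.
exists k1, k2; rewrite /inner_side vS e1 e2 yS zS; split => //.
by apply: contra yz => /eqP E; rewrite -e1 -e2 E.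
Qed.

Lemma elem_on_glue v v' a : trinode v -> trinode v' -> adj v v' -> elem_on v a ->
  exists2 a', elem_on v' a' & bz_glued v v' a a'.
Proof.
move=> tv tv' vv' [ea sides]; have [k [k' [e1 e2]]] := tside_edge tv tv' vv'.
have glue_to a' : bweight a k = swap_pair (bweight a' k') -> bz_glued v v' a a'.
  exact: bz_gluedI.
have unused b c : ~~ side_nz b c -> bweight b c = (0, 0) by move/negbNE/eqP.
have [v'S|v'S] := boolP (v' \in S); last first.
  exists zero_bz.
    by split=> [|c]; [left | rewrite /side_nz bweight_zero /inner_side (negbTE v'S)].
  by apply: glue_to; rewrite bweight_zero unused // sides /inner_side e1 (negbTE v'S) andbF.
have two := inner_sides_two v'S tv'; have [c [_ [_ Dc _]]] := two.
have [vS|vS] := boolP (v \in S).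
  have Dk : inner_side v k by rewrite /inner_side vS e1 v'S.
  have Dk' : inner_side v' k' by rewrite /inner_side v'S e2 vS.
  have [i Ei] := elem_on_inner (conj ea sides) Dk.
  have [b Eb] : exists b, bweight a k = unit_wt b.
    move: (sides k); rewrite Dk Ei /side_nz.
    by case: (bweight_elem_cases i k) => ->; [|exists true|exists false].
  have [i' [sides' Eb']] := elem_with_sides (~~ b) Dk' two.
  exists (elem_bz i'); first by split=> //; right; exists i'.
  by apply: glue_to; rewrite Eb Eb' swap_unit_wt.
have [i' [sides' _]] := elem_with_sides true Dc two.
exists (elem_bz i'); first by split=> //; right; exists i'.
apply: glue_to; rewrite !unused //; first by rewrite sides' /inner_side e2 (negbTE vS) andbF.
by rewrite sides /inner_side (negbTE vS).
Qed.

Lemma elem_on_exists v0 k0 b : trinode v0 -> inner_side v0 k0 ->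
  exists w : assignment T,
    [/\ inQ w, forall v, trinode v -> elem_on v (w v) & bweight (w v0) k0 = unit_wt b].
Proof.
move=> t0 D0; have v0S : v0 \in S by case/andP: D0.
have [i [sides Eb]] := elem_with_sides b D0 (inner_sides_two v0S t0).
have [w [Qw w0 ok]] := @propagate_inQ T elem_on v0 (elem_bz i)
  (fun v a ok => hexagon_elem0 ok.1) elem_on_glue t0 (conj (or_intror (ex_intro _ i erefl)) sides).
by exists w; rewrite ?w0.
Qed.

Section ElemOnAssignment.
Variable w : assignment T.
Hypotheses (Qw : inQ w) (ok : forall v, trinode v -> elem_on v (w v)).

Lemma elem_on_zero v : ~~ ((v \in S) && trinode v) -> w v = zero_bz.
Proof.
have [tv|ntv] := boolP (trinode v); last by move=> _; apply: inQ_zero.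
by rewrite andbT => vS; apply: elem_on_out (ok tv) vS.
Qed.

Lemma nz_from_elem_on x y : nz_from w x y = [&& trinode x, adj x y, x \in S & y \in S].
Proof.
have [tx|tx] /= := boolP (trinode x); last exact: nz_from_leaf.
have [xy|xy] /= := boolP (adj x y).
  by have [k e] := tside_onto tx xy; rewrite (nz_fromE _ tx e) (proj2 (ok tx)) /inner_side e.
apply/negbTE/negP => /existsP[k /andP[/eqP e _]]; move: xy; rewrite -e adj_tside //.
Qed.

Lemma elem_on_support : 3 <= #|leaves T| -> bz_support w = sub_edges S.
Proof.
move=> n3; apply/setP => [[a b]]; rewrite in_bz_support in_sub_edges /supp_edge /induced.
rewrite !nz_from_elem_on; have [ab|] //= := boolP (adj a b); rewrite adj_sym ab /=.
have [ta|la] := boolP (trinode a); have [tb|lb] := boolP (trinode b);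
  try by case: (a \in S); case: (b \in S).
by rewrite -!leafE in la lb; rewrite (negbTE (leaves_nonadjacent n3 la lb)) in ab.
Qed.

(* A nonzero element below [w] agrees with [w] on one trinode of [S], and the
   agreement spreads along [S] because each used side forces its neighbour. *)
Lemma below_elem_on u : inQ u -> assign_le u w -> u <> zero_assign T -> u = w.
Proof.
move=> Qu leu nu.
have agree v : v \in S -> trinode v -> u v <> zero_bz -> u v = w v.
  move=> vS tv nz; have [i Ei] : exists i, w v = elem_bz i.
    by case: (ok tv) => [[Ew|//] _]; case: nz; apply: bz_le0_eq; rewrite -Ew.
  have le : bz_le (u v) (elem_bz i) by rewrite -Ei.
  by case: (hexagon_le_elem (inQ_hexagon Qu tv) le) => E; [case: nz | rewrite E Ei].
have [v1 nz1] := assign_neq0 nu; have t1 := inQ_trinode Qu nz1.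
have v1S : v1 \in S.
  by apply: contraT => nS; case: nz1; apply: bz_le0_eq; rewrite -(elem_on_out (ok t1) nS).
have onS v : v \in S -> trinode v -> u v = w v.
  move=> vS tv; have c := connect_induced_trinodes (PS.2.1 _ _ v1S vS) t1 tv.
  apply: (connect_propagate (P := fun v => u v = w v)) c (agree _ v1S t1 nz1).
  move=> a b /and3P[ab]; rewrite !inE => /andP[aS ta] /andP[bS tb] Ea.
  have [k [k' [e1 e2]]] := tside_edge ta tb ab.
  apply: agree => // Eb.
  have : side_nz (u a) k by rewrite Ea (proj2 (ok ta)) /inner_side aS e1 bS.
  by rewrite (side_nz_swap (inQ_glued Qu ta tb ab e1 e2)) Eb /side_nz bweight_zero.
apply/ffunP => v; have [/andP[vS tv]|out] := boolP ((v \in S) && trinode v); first exact: onS.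
by rewrite (elem_on_zero out); apply: bz_le0_eq; rewrite -(elem_on_zero out).
Qed.

Lemma elem_on_min_gen : 3 <= #|leaves T| -> min_gen w.
Proof.
move=> n3; have [v0 v0S t0] := proper_has_trinode n3 PS.
have [k1 [_ [_ D1 _]]] := inner_sides_two v0S t0.
split=> //; split.
  move=> E; have := proj2 (ok t0) k1; rewrite D1 E ffunE.
  by rewrite /side_nz bweight_zero.
move=> [u [u' [Qu [Qu' [nu [nu' E]]]]]].
have Eu : u = w by apply: below_elem_on => // v; rewrite E; apply: bz_le_add_assign.
apply: nu'; apply/ffunP => v; apply: bz_ext => j hj.
have : ent (w v) j = ent (add_assign u u' v) j by rewrite -E.
by rewrite ent_add_assign Eu ffunE ent_zero; lia.
Qed.

End ElemOnAssignment.

Lemma elem_on_eq (w w' : assignment T) v0 k0 : inQ w -> inQ w' ->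
  (forall v, trinode v -> elem_on v (w v)) -> (forall v, trinode v -> elem_on v (w' v)) ->
  trinode v0 -> inner_side v0 k0 -> bweight (w v0) k0 = bweight (w' v0) k0 -> w = w'.
Proof.
move=> Qw Qw' ok ok' t0 D0 E0.
have same_sides v : trinode v -> forall k, side_nz (w v) k = side_nz (w' v) k.
  by move=> tv k; rewrite (proj2 (ok v tv)) (proj2 (ok' v tv)).
have agree v k : trinode v -> inner_side v k -> bweight (w v) k = bweight (w' v) k ->
    w v = w' v.
  move=> tv D E; have [i Ei] := elem_on_inner (ok v tv) D.
  have [i' Ei'] := elem_on_inner (ok' v tv) D.
  rewrite Ei Ei' in E *; apply: (elem_eq_of_side (k := k)) => // [k'|].
    by rewrite -Ei -Ei' same_sides.
  by rewrite -Ei (proj2 (ok v tv)).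
have v0S : v0 \in S by case/andP: D0.
have onS v : v \in S -> trinode v -> w v = w' v.
  move=> vS tv; have c := connect_induced_trinodes (PS.2.1 _ _ v0S vS) t0 tv.
  apply: (connect_propagate (P := fun v => w v = w' v)) c (agree _ _ t0 D0 E0).
  move=> a b /and3P[ab]; rewrite !inE => /andP[aS ta] /andP[bS tb] Ea.
  have [k [k' [e1 e2]]] := tside_edge ta tb ab.
  apply: (agree _ k') => //; first by rewrite /inner_side bS e2 aS.
  have ba : adj b a by rewrite adj_sym.
  by rewrite (inQ_glued Qw tb ta ba e2 e1) (inQ_glued Qw' tb ta ba e2 e1) Ea.
apply/ffunP => v; have [/andP[vS tv]|out] := boolP ((v \in S) && trinode v); first exact: onS.
by rewrite (elem_on_zero Qw ok out) (elem_on_zero Qw' ok' out).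
Qed.

Lemma min_gen_elem_on (w : assignment T) : min_gen w -> bz_support w = sub_edges S ->
  forall v, trinode v -> elem_on v (w v).
Proof.
move=> mg supp v tv; have [Qw _] := mg; split=> [|k]; first exact: min_gen_elem0.
have vy : adj v (tside v k) by apply: adj_tside.
rewrite -(nz_fromE _ tv erefl) /inner_side.
have := in_bz_support w v (tside v k); rewrite supp in_sub_edges /induced vy /= => ->.
rewrite /supp_edge vy /=; have [ty|ly] := boolP (trinode (tside v k)).
  by rewrite (nz_fromC Qw tv ty vy) orbb.
by rewrite (nz_from_leaf v Qw ly) orbF.
Qed.

(* The unit weight carried by one inner side of [S] is omega_1 or omega_2, and it
   determines the generator. *)
Lemma min_gens_on_subtree : 3 <= #|leaves T| ->
  exists w1 w2 : assignment T,
    w1 <> w2 /\ min_gen w1 /\ min_gen w2 /\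
    bz_support w1 = sub_edges S /\ bz_support w2 = sub_edges S /\
    (forall w, min_gen w -> bz_support w = sub_edges S -> w = w1 \/ w = w2).
Proof.
move=> n3; have [v0 v0S t0] := proper_has_trinode n3 PS.
have [k0 [_ [_ D0 _]]] := inner_sides_two v0S t0.
have [w1 [Q1 ok1 b1]] := elem_on_exists true t0 D0.
have [w2 [Q2 ok2 b2]] := elem_on_exists false t0 D0.
exists w1, w2; split; first by move=> E; move: b1; rewrite E b2.
split; first exact: elem_on_min_gen Q1 ok1 n3.
split; first exact: elem_on_min_gen Q2 ok2 n3.
split; first exact: elem_on_support Q1 ok1 n3.
split; first exact: elem_on_support Q2 ok2 n3.
move=> w mg supp; have okw := min_gen_elem_on mg supp; have [Qw _] := mg.
have [i Ei] := elem_on_inner (okw v0 t0) D0.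
have : side_nz (w v0) k0 by rewrite (proj2 (okw v0 t0)).
rewrite Ei /side_nz; case: (bweight_elem_cases i k0) => [->//|E|E] _; rewrite -Ei in E.
  by left; apply: (elem_on_eq Qw Q1 okw ok1 t0 D0); rewrite E b1.
by right; apply: (elem_on_eq Qw Q2 okw ok2 t0 D0); rewrite E b2.
Qed.

End GivenSupport.

Lemma min_gens_of_subtrees (T : tritree) : 3 <= #|leaves T| ->
  forall ss : seq {set tv T}, uniq ss -> (forall S, S \in ss -> proper_subtree S) ->
  exists s : seq (assignment T),
    [/\ uniq s,
        forall w, w \in s <-> min_gen w /\ exists2 S, S \in ss & bz_support w = sub_edges S
      & size s = 2 * size ss].
Proof.
move=> n3; elim=> [|S ss IH] /=.
  by move=> _ _; exists [::]; split=> // w; split=> [//|[_ []]].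
case/andP => Sss uss PSs.
have PS : proper_subtree S by apply: PSs; rewrite mem_head.
have in_tail S' : S' \in ss -> S' \in S :: ss by move=> S'ss; rewrite inE S'ss orbT.
have [s [us ms size_s]] := IH uss (fun S' S'ss => PSs S' (in_tail S' S'ss)).
have [w1 [w2 [w12 [m1 [m2 [s1 [s2 only]]]]]]] := min_gens_on_subtree PS n3.
have notin w : bz_support w = sub_edges S -> w \notin s.
  move=> sw; apply/negP => /ms[_ [S' S'ss sw']].
  suff ES : S = S' by move: Sss; rewrite ES S'ss.
  by apply: sub_edges_inj => //; [exact: PSs (in_tail _ S'ss) | rewrite -sw -sw'].
exists [:: w1, w2 & s]; split.
- by rewrite /= inE negb_or us notin // notin // !andbT; apply/eqP.
- move=> w; rewrite !inE; split.
    case/or3P => [/eqP ->|/eqP ->|ws]; try by split=> //; exists S; rewrite ?mem_head.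
    by have [mg [S' S'ss sw]] := (ms w).1 ws; split=> //; exists S'; rewrite ?in_tail.
  case=> mg [S0]; rewrite inE => /orP[/eqP ->|S0ss] sw.
    by case: (only w mg sw) => ->; rewrite eqxx ?orbT.
  by rewrite (ms w).2 ?orbT //; split=> //; exists S0.
- by rewrite /= size_s mulnS.
Qed.

Unset Implicit Arguments.

Theorem mainTheorem2 (T : tritree) (n : nat) :
  n = #|leaves T| -> (3 <= n)%N ->
  (forall S : {set tv T}, proper_subtree S ->
     exists w1 w2 : assignment T,
       w1 <> w2 /\ min_gen w1 /\ min_gen w2 /\
       bz_support w1 = sub_edges S /\ bz_support w2 = sub_edges S /\
       (forall w, min_gen w -> bz_support w = sub_edges S -> w = w1 \/ w = w2))
  /\ (forall w : assignment T, min_gen w ->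
        exists S : {set tv T}, proper_subtree S /\ bz_support w = sub_edges S)
  /\ (exists s : seq (assignment T),
        [/\ uniq s, (forall w, min_gen w <-> w \in s) &
            size s = (2 * (2 ^ n - n - 1))%N]).
Proof.
move=> -> n3; split; first by move=> S PS; apply: min_gens_on_subtree.
split; first by move=> w mg; exists (supp_set w); apply: min_gen_proper_support.
have subtrees (S : {set tv T}) : S \in enum [set S | proper_subtreeb S] -> proper_subtree S.
  by rewrite mem_enum inE => /proper_subtreeP.
have [s [us ms size_s]] := min_gens_of_subtrees n3 (enum_uniq _) subtrees.
exists s; split=> // [w|]; last by rewrite size_s -cardE card_proper_subtrees.
split=> [mg|/ms[] //]; have [PS sw] := min_gen_proper_support mg.
by apply/ms; split=> //; exists (supp_set w); rewrite // mem_enum inE; apply/proper_subtreeP.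
Qed.
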